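(* Let $(G,\cdot)$ be a two-step nilpotent group and $n$ an integer, and define $a\circ b=a\cdot a^{-n}ba^{n}=ab[b,a]^n$ for $a,b\in G$. Then $(G,\circ)$ is a two-step nilpotent group.
   Context: A two-step nilpotent group is a group of nilpotency class at most $2$, i.e. all commutators are central; the commutator convention is $[a,b]=a^{-1}b^{-1}ab$. (For this operation, $(G,\cdot,\circ)$ is the skew left brace associated with the post-group $a\triangleright b=a^{-n}ba^n$ via $a\circ b=a\cdot(a\triangleright b)$.) *)

From HB Require Import structures.
From mathcomp Require Import all_boot all_order all_algebra.
From mathcomp Require Import monoid.

Set Implicit Arguments.
Unset Strict Implicit.
Unset Printing Implicit Defensive.

Local Open Scope group_scope.

Definition zexpg (G : groupType) (x : G) (n : int) : G :=
  match n with
  | Posz k => x ^+ k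
  | Negz k => x ^- k.+1
  end.

Definition group_axioms (T : Type) (mul : T -> T -> T) (one : T) (inv : T -> T)
  : Prop :=
  [/\ (forall a b c, mul a (mul b c) = mul (mul a b) c),
      (forall a, mul one a = a /\ mul a one = a)
    & (forall a, mul (inv a) a = one /\ mul a (inv a) = one)].

Definition comm_law (T : Type) (mul : T -> T -> T) (inv : T -> T) (a b : T) : T :=
  mul (inv a) (mul (inv b) (mul a b)).

Definition class_le2_law (T : Type) (mul : T -> T -> T) (inv : T -> T) : Prop :=
  forall a b c, mul (comm_law mul inv a b) c = mul c (comm_law mul inv a b).

Definition two_step_nilpotent (G : groupType) : Prop :=
  forall a b c : G, commute [~ a, b] c.

Definition circ (G : groupType) (n : int) (a b : G) : G :=
  a * (zexpg a (- n)%R * b * zexpg a n).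

Definition is_two_step_nilpotent_group (T : Type) (mul : T -> T -> T) : Prop :=
  exists (one : T) (inv : T -> T),
    group_axioms mul one inv /\ class_le2_law mul inv.

(* In a group of class at most 2, conjugation is [b ^ x = b * [~ b, x]], so
   [a o b = a * b * beta a b] with [beta a b = [~ b, a ^ n]].  This [beta] takes
   central values, is multiplicative in each argument, and is trivial as soon
   as one argument is central.  Twisting the product of a class-2 group by any
   such map gives a group: in the associativity law both sides carry the same
   central factors by bimultiplicativity.  A commutator for the twisted law is
   the ordinary commutator times central factors, hence central in [G]; and
   central elements of [G] are central for the twisted law too, because [beta]
   vanishes on them. *)

From HB Require Import structures.
From mathcomp Require Import all_boot all_order all_algebra.
From mathcomp Require Import monoid.

Set Implicit Arguments.
Unset Strict Implicit.
Unset Printing Implicit Defensive.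

Local Open Scope group_scope.

Section Central.

Variable G : groupType.
Implicit Types (x y z : G) (m : int).

Definition central z := forall x, commute z x.

Lemma central1 : central 1.
Proof. by move=> x; rewrite /commute mul1g mulg1. Qed.

Lemma centralM x y : central x -> central y -> central (x * y).
Proof. by move=> cx cy z; rewrite /commute -mulgA cy !mulgA cx. Qed.

Lemma centralV x : central x -> central x^-1.
Proof. by move=> cx y; apply/commute_sym/commuteV/commute_sym. Qed.

Lemma centralX x k : central x -> central (x ^+ k).
Proof. by move=> cx y; apply/commute_sym/commuteX/commute_sym. Qed.

Lemma central_zexpg x m : central x -> central (zexpg x m).
Proof. by case: m => k /= cx; [apply: centralX | apply/centralV/centralX]. Qed.

Lemma mulg_centralAC x y z : central z -> x * z * y = x * y * z.
Proof. by move=> cz; rewrite -mulgA cz mulgA. Qed.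

Lemma commg_centralr x z : central z -> [~ x, z] = 1.
Proof. by move=> cz; apply/eqP/commgP/commute_sym. Qed.

Lemma commg_centrall x z : central z -> [~ z, x] = 1.
Proof. by move=> cz; apply/eqP/commgP. Qed.

Lemma zexpgN x m : zexpg x (- m)%R = (zexpg x m)^-1.
Proof. by case: m => [[|k]|k] /=; rewrite ?invg1 ?invgK. Qed.

Lemma zexpgMn x y m : commute x y -> zexpg (x * y) m = zexpg x m * zexpg y m.
Proof.
move=> cxy; case: m => k /=; rewrite expgMn //.
by rewrite invgM; apply/commuteV/commute_sym/commuteV/commuteX2.
Qed.

Lemma conjg_commg x y : x ^ y = x * [~ x, y].
Proof. by rewrite commgEl mulVKg. Qed.

Lemma conjg_central x z : central z -> z ^ x = z.
Proof. by move=> cz; apply/conjg_fixP; rewrite commg_centrall. Qed.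

End Central.

Section ClassTwoCommutators.

Variable G : groupType.
Hypothesis nilG : two_step_nilpotent G.
Implicit Types (c x y : G).

Lemma commgMr c x y : [~ c, x * y] = [~ c, x] * [~ c, y].
Proof.
have cRxy : c ^ (x * y) = c * ([~ c, y] * [~ c, x]).
  rewrite conjgM (conjg_commg c x) conjMg (conjg_commg c y) -mulgA.
  by rewrite (conjg_central _ (nilG c x)).
by rewrite commgEl cRxy mulKg; apply: nilG.
Qed.

Lemma commgVr c x : [~ c, x^-1] = [~ c, x]^-1.
Proof. by apply/esym/mulg1_eq; rewrite -commgMr mulgV commg1. Qed.

Lemma commgMl x y c : [~ x * y, c] = [~ x, c] * [~ y, c].
Proof. by rewrite -invgR commgMr invgM !invgR; apply: nilG. Qed.

Lemma commgXr c x k : [~ c, x ^+ k] = [~ c, x] ^+ k.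
Proof.
elim: k => [|k IHk]; first exact: commg1.
by rewrite !expgSr commgMr IHk.
Qed.

Lemma commg_zexpgr c x m : [~ c, zexpg x m] = zexpg [~ c, x] m.
Proof. by case: m => k /=; rewrite ?commgVr commgXr. Qed.

End ClassTwoCommutators.

Section CentralTwist.

Variables (G : groupType) (beta : G -> G -> G).
Hypothesis beta_central : forall x y, central (beta x y).
Hypothesis beta_mull : forall x y z, beta (x * y) z = beta x z * beta y z.
Hypothesis beta_mulr : forall x y z, beta x (y * z) = beta x y * beta x z.
Hypothesis beta_centrall : forall z y, central z -> beta z y = 1.
Hypothesis beta_centralr : forall x z, central z -> beta x z = 1.
Implicit Types x y z : G.

Definition twist x y := x * y * beta x y.

Definition twist_inv x := x^-1 * beta x x.

Lemma twist_mulg_centrall x y z : central z -> twist (x * z) y = twist x y * z.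
Proof.
move=> cz; rewrite /twist beta_mull (beta_centrall _ cz) mulg1.
by rewrite (mulg_centralAC _ _ cz) -!mulgA (cz (beta x y)).
Qed.

Lemma twist_mulg_centralr x y z : central z -> twist x (y * z) = twist x y * z.
Proof.
move=> cz; rewrite /twist beta_mulr (beta_centralr _ cz) mulg1.
by rewrite mulgA (mulg_centralAC _ _ cz).
Qed.

Lemma twistA : associative twist.
Proof.
move=> x y z.
rewrite {2}/twist twist_mulg_centralr //.
rewrite [twist x y]/twist twist_mulg_centrall //.
rewrite /twist beta_mull beta_mulr !mulgA.
by rewrite !(mulg_centralAC _ _ (beta_central x y)).
Qed.

Lemma twist1g : left_id 1 twist.
Proof.
by move=> x; rewrite /twist beta_centrall ?mul1g ?mulg1 //; apply: central1.
Qed.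

Lemma twistg1 : right_id 1 twist.
Proof. by move=> x; rewrite /twist beta_centralr ?mulg1 //; exact: central1. Qed.

Lemma twistVg : left_inverse 1 twist_inv twist.
Proof.
move=> x; rewrite twist_mulg_centrall // /twist mulVg mul1g -beta_mull mulVg.
exact/beta_centrall/central1.
Qed.

Lemma twistgV : right_inverse 1 twist_inv twist.
Proof.
move=> x; rewrite twist_mulg_centralr // /twist mulgV mul1g -beta_mulr mulVg.
exact/beta_centralr/central1.
Qed.

Hypothesis nilG : two_step_nilpotent G.

Lemma central_twist_comm a b : central (comm_law twist twist_inv a b).
Proof.
have cb := beta_central.
rewrite /comm_law /twist_inv {3}/twist.
rewrite twist_mulg_centralr // twist_mulg_centrall //.
rewrite twist_mulg_centralr // twist_mulg_centrall // twist_mulg_centralr //.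
rewrite [twist b^-1 _]/twist twist_mulg_centralr // /twist.
by do 5 (apply: centralM; last exact: cb); exact: (nilG a b).
Qed.

Lemma twist_two_step_nilpotent : is_two_step_nilpotent_group twist.
Proof.
exists 1, twist_inv; split.
  split=> [|x|x]; [exact: twistA | split; [exact: twist1g | exact: twistg1] |].
  by split; [exact: twistVg | exact: twistgV].
move=> a b c; move: (comm_law _ _ a b) (central_twist_comm a b) => w cw.
by rewrite /twist (beta_centrall _ cw) (beta_centralr _ cw) !mulg1; apply: cw.
Qed.

End CentralTwist.

Lemma is_two_step_nilpotent_group_eq (T : Type) (mul1 mul2 : T -> T -> T) :
  mul1 =2 mul2 ->
  is_two_step_nilpotent_group mul1 -> is_two_step_nilpotent_group mul2.
Proof.
move=> e [one [inv [[mulA mul1g mulVg] comm_central]]]; exists one, inv.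
rewrite /group_axioms /class_le2_law /comm_law.
split; [split|]; intros; rewrite -!e.
- exact: mulA.
- exact: mul1g.
- exact: mulVg.
- exact: comm_central.
Qed.

Section PowerConjugationTwist.

Variables (G : groupType) (n : int).
Hypothesis nilG : two_step_nilpotent G.
Implicit Types a b c : G.

Definition circ_beta a b := [~ b, zexpg a n].

Lemma circE a b : circ n a b = twist circ_beta a b.
Proof. by rewrite /circ zexpgN -mulgA -conjgE conjg_commg mulgA. Qed.

Lemma circ_beta_mull a b c :
  circ_beta (a * b) c = circ_beta a c * circ_beta b c.
Proof. by rewrite /circ_beta !commg_zexpgr // commgMr // zexpgMn. Qed.

Lemma circ_beta_mulr a b c :
  circ_beta a (b * c) = circ_beta a b * circ_beta a c.
Proof. exact: commgMl. Qed.

Lemma circ_beta_centrall a b : central a -> circ_beta a b = 1.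
Proof. by move=> ca; apply/commg_centralr/central_zexpg. Qed.

Lemma circ_beta_centralr a b : central b -> circ_beta a b = 1.
Proof. exact: commg_centrall. Qed.

End PowerConjugationTwist.

Theorem proposition5p4 (G : groupType) (n : int) :
  two_step_nilpotent G -> is_two_step_nilpotent_group (@circ G n).
Proof.
move=> nilG.
apply: (is_two_step_nilpotent_group_eq (fun a b => esym (circE n a b))).
apply: (twist_two_step_nilpotent _ _ _ _ _ nilG).
- by move=> a b; apply: nilG.
- exact: circ_beta_mull.
- exact: circ_beta_mulr.
- exact: circ_beta_centrall.
- exact: circ_beta_centralr.
Qed.
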